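(* For $a>0$ let $\delta^{(a)}=(\delta_0,\delta_1)=\left(\frac{a}{2a+1},\frac{a+1}{2a+1}\right)$ (the Bayes predictive decision for the symmetric Beta$(a,a)$ prior). Then $$\sup_{\theta\in[0,1]}R_{\delta^{(a)}}(\theta)=\begin{cases}\log\dfrac{2a+1}{a+1}, & a\ge 1/3,\\[2mm] \dfrac12\log\dfrac{a+1}{4a}+\log\dfrac{2a+1}{a+1}, & 0<a\le 1/3.\end{cases}$$
   Context: Bernoulli model: for $\theta\in[0,1]$, $p_\theta(x)=\theta^x(1-\theta)^{1-x}$, $x\in\{0,1\}$. A nonrandomized decision is a pair $\delta=(\delta_0,\delta_1)\in[0,1]^2$, used as the predictive distribution $p_\delta(y\mid x)=\delta_x^{\,y}(1-\delta_x)^{1-y}$ for a future $y\in\{0,1\}$ after observing $x$. The Kullback–Leibler risk is $R_\delta(\theta)=-S(\theta)+\theta^2\log\frac1{\delta_1}+\theta(1-\theta)\log\frac1{1-\delta_1}+\theta(1-\theta)\log\frac1{\delta_0}+(1-\theta)^2\log\frac1{1-\delta_0}$, where $S(\theta)=-\theta\log\theta-(1-\theta)\log(1-\theta)$ (with $0\log 0=0$) is the binary entropy. *)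

From Stdlib Require Import Reals.
Open Scope R_scope.

Definition xlogx (x : R) : R := if Req_EM_T x 0 then 0 else x * ln x.

Definition bin_entropy (t : R) : R := - xlogx t - xlogx (1 - t).

Definition KL_risk (d0 d1 t : R) : R :=
  - bin_entropy t
  + t ^ 2 * ln (1 / d1)
  + t * (1 - t) * ln (1 / (1 - d1))
  + t * (1 - t) * ln (1 / d0)
  + (1 - t) ^ 2 * ln (1 / (1 - d0)).

Definition delta0 (a : R) : R := a / (2 * a + 1).
Definition delta1 (a : R) : R := (a + 1) / (2 * a + 1).

Definition risk_values (a : R) (r : R) : Prop :=
  exists t, 0 <= t <= 1 /\ r = KL_risk (delta0 a) (delta1 a) t.

(* The risk of the Bayes decision splits as
     R(t) = log((2a+1)/(a+1)) + 2 t(1-t) log((a+1)/(4a)) - (S(t) - 4 log 2 t(1-t)).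
   The entropy dominates the parabola 4 log 2 t(1-t), with equality at t = 0, 1/2, 1:
   with x = 2t - 1 this says (1+x) log(1+x) + (1-x) log(1-x) <= 2 log 2 x^2, which holds
   because the difference of the two sides vanishes at 0 and (in the limit) at 1 and has
   a concave derivative vanishing at 0, so it first increases and then decreases.
   Hence R(t) <= log((2a+1)/(a+1)) + 2 t(1-t) log((a+1)/(4a)); the second term has the
   sign of 1/3 - a, so the supremum is attained at t = 0 when a >= 1/3 and at t = 1/2
   when a <= 1/3. *)

From Stdlib Require Import Reals Lra Psatz.
From Coquelicot Require Import Coquelicot.
Open Scope R_scope.

Definition gap (x : R) : R :=
  2 * ln 2 * x ^ 2 - ((1 + x) * ln (1 + x) + (1 - x) * ln (1 - x)).
Definition gap' (x : R) : R := 4 * ln 2 * x - ln (1 + x) + ln (1 - x).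
Definition gap'' (x : R) : R := 4 * ln 2 - 2 / (1 - x ^ 2).

Lemma ln2_gt_0 : 0 < ln 2.
Proof. generalize ln_lt_2; lra. Qed.

Lemma derivable_pt_lim_gap x : -1 < x < 1 -> derivable_pt_lim gap x (gap' x).
Proof.
  intros Hx; apply is_derive_Reals; unfold gap, gap'.
  auto_derive; [repeat split; lra|].
  replace (1 + - x) with (1 - x) by ring; field; lra.
Qed.

Lemma derivable_pt_lim_gap' x : -1 < x < 1 -> derivable_pt_lim gap' x (gap'' x).
Proof.
  intros Hx; apply is_derive_Reals; unfold gap', gap''.
  auto_derive; [repeat split; lra|].
  replace (1 + - x) with (1 - x) by ring; field; split; [|split]; nra.
Qed.

Lemma gap_0 : gap 0 = 0.
Proof. unfold gap; rewrite Rplus_0_r, Rminus_0_r, ln_1; ring. Qed.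

Lemma gap'_0 : gap' 0 = 0.
Proof. unfold gap'; rewrite Rplus_0_r, Rminus_0_r, ln_1; ring. Qed.

Lemma gap_opp x : gap (- x) = gap x.
Proof.
  unfold gap; replace (1 + - x) with (1 - x) by ring;
    replace (1 - - x) with (1 + x) by ring; ring.
Qed.

Lemma gap''_decreasing x y : 0 <= x -> x < y -> y < 1 -> gap'' y < gap'' x.
Proof.
  intros Hx Hxy Hy; unfold gap''.
  assert (2 / (1 - x ^ 2) < 2 / (1 - y ^ 2)); [|lra].
  unfold Rdiv; apply Rmult_lt_compat_l; [lra|].
  apply Rinv_lt_contravar; [apply Rmult_lt_0_compat|]; nra.
Qed.

(* Since gap' vanishes at 0 and is concave on [0, 1), it changes sign at most once there. *)
Lemma gap'_neg_after x y : 0 <= x -> x < y -> y < 1 -> gap' x < 0 -> gap' y < 0.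
Proof.
  intros Hx Hxy Hy Hgx.
  destruct (Req_dec x 0) as [->|Hx0]; [rewrite gap'_0 in Hgx; lra|].
  destruct (MVT_cor2 gap' gap'' 0 x) as [c [Ec Hc]]; [lra| |].
  { intros c Hc; apply derivable_pt_lim_gap'; lra. }
  destruct (MVT_cor2 gap' gap'' x y) as [d [Ed Hd]]; [lra| |].
  { intros d Hd; apply derivable_pt_lim_gap'; lra. }
  rewrite gap'_0 in Ec.
  assert (gap'' c < 0) by nra.
  assert (gap'' d < gap'' c) by (apply gap''_decreasing; lra).
  nra.
Qed.

Lemma gap_lower_bound y : 0 <= y < 1 -> - 3 * ln 2 * (1 - y) <= gap y.
Proof.
  intros Hy; unfold gap.
  assert (ln (1 - y) <= 0) by (rewrite <- ln_1; apply ln_le; lra).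
  assert (ln (1 + y) <= ln 2) by (apply ln_le; lra).
  assert (L2 := ln2_gt_0).
  assert ((1 - y) * ln (1 - y) <= 0) by nra.
  assert ((1 + y) * ln (1 + y) <= (1 + y) * ln 2) by nra.
  assert (0 <= ln 2 * (1 - y) ^ 2) by (apply Rmult_le_pos; nra).
  nra.
Qed.

Lemma gap_nonneg x : 0 <= x < 1 -> 0 <= gap x.
Proof.
  intros Hx; destruct (Req_dec x 0) as [->|Hx0]; [rewrite gap_0; lra|].
  assert (L2 := ln2_gt_0).
  destruct (Rlt_or_le (gap' x) 0) as [Hneg|Hpos].
  - (* gap decreases on [x, 1), yet it is close to 0 near 1 *)
    apply le_epsilon; intros eps Heps.
    set (s := Rmin (eps / (3 * ln 2)) ((1 - x) / 2)).
    assert (Hs : 0 < s) by (apply Rmin_glb_lt; apply Rdiv_lt_0_compat; lra).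
    assert (Hs1 : s <= (1 - x) / 2) by apply Rmin_r.
    assert (Hs2 : 3 * ln 2 * s <= eps).
    { assert (Hm : s <= eps / (3 * ln 2)) by apply Rmin_l.
      apply (Rmult_le_compat_l (3 * ln 2)) in Hm; [|lra].
      replace (3 * ln 2 * (eps / (3 * ln 2))) with eps in Hm by (field; lra); exact Hm. }
    destruct (MVT_cor2 gap gap' x (1 - s)) as [c [Ec Hc]]; [lra| |].
    { intros c Hc; apply derivable_pt_lim_gap; lra. }
    assert (gap' c < 0) by (apply (gap'_neg_after x c); lra).
    assert (- 3 * ln 2 * (1 - (1 - s)) <= gap (1 - s)) by (apply gap_lower_bound; lra).
    nra.
  - destruct (MVT_cor2 gap gap' 0 x) as [c [Ec Hc]]; [lra| |].
    { intros c Hc; apply derivable_pt_lim_gap; lra. }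
    assert (0 <= gap' c).
    { apply Rnot_lt_le; intros Hc'.
      assert (gap' x < 0) by (apply (gap'_neg_after c x); lra); lra. }
    rewrite gap_0 in Ec; nra.
Qed.

Lemma xlogx_pos t : 0 < t -> xlogx t = t * ln t.
Proof. intros Ht; unfold xlogx; destruct (Req_EM_T t 0); lra. Qed.

Lemma xlogx_0 : xlogx 0 = 0.
Proof. unfold xlogx; destruct (Req_EM_T 0 0); lra. Qed.

Lemma xlogx_1 : xlogx 1 = 0.
Proof. rewrite xlogx_pos, ln_1; lra. Qed.

Lemma bin_entropy_0 : bin_entropy 0 = 0.
Proof. unfold bin_entropy; rewrite Rminus_0_r, xlogx_0, xlogx_1; ring. Qed.

Lemma bin_entropy_1 : bin_entropy 1 = 0.
Proof. unfold bin_entropy; rewrite Rminus_eq_0, xlogx_0, xlogx_1; ring. Qed.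

Lemma bin_entropy_half : bin_entropy (1 / 2) = ln 2.
Proof.
  unfold bin_entropy; replace (1 - 1 / 2) with (/ 2) by field.
  replace (1 / 2) with (/ 2) by field.
  rewrite xlogx_pos, ln_Rinv; lra.
Qed.

Lemma bin_entropy_ge_parabola t : 0 <= t <= 1 -> 4 * ln 2 * (t * (1 - t)) <= bin_entropy t.
Proof.
  intros Ht.
  destruct (Req_dec t 0) as [->|Ht0]; [rewrite bin_entropy_0; lra|].
  destruct (Req_dec t 1) as [->|Ht1]; [rewrite bin_entropy_1; lra|].
  assert (Hgap : 0 <= gap (2 * t - 1)).
  { destruct (Rle_or_lt 0 (2 * t - 1)).
    - apply gap_nonneg; lra.
    - rewrite <- gap_opp; apply gap_nonneg; lra. }
  unfold gap in Hgap; unfold bin_entropy; rewrite !xlogx_pos by lra.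
  replace (1 + (2 * t - 1)) with (2 * t) in Hgap by ring.
  replace (1 - (2 * t - 1)) with (2 * (1 - t)) in Hgap by ring.
  rewrite !ln_mult in Hgap by lra.
  nra.
Qed.

Lemma KL_risk_delta_eq a t : 0 < a ->
  KL_risk (delta0 a) (delta1 a) t =
  ln ((2 * a + 1) / (a + 1)) + 2 * (t * (1 - t)) * ln ((a + 1) / (4 * a))
  - (bin_entropy t - 4 * ln 2 * (t * (1 - t))).
Proof.
  intros Ha; unfold KL_risk, delta0, delta1.
  replace (1 / ((a + 1) / (2 * a + 1))) with ((2 * a + 1) / (a + 1)) by (field; lra).
  replace (1 / (1 - (a + 1) / (2 * a + 1))) with ((2 * a + 1) / a) by (field; lra).
  replace (1 / (a / (2 * a + 1))) with ((2 * a + 1) / a) by (field; lra).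
  replace (1 / (1 - a / (2 * a + 1))) with ((2 * a + 1) / (a + 1)) by (field; lra).
  replace ((2 * a + 1) / a) with ((2 * a + 1) / (a + 1) * ((a + 1) / (4 * a) * (2 * 2)))
    by (field; lra).
  assert (0 < (2 * a + 1) / (a + 1)) by (apply Rdiv_lt_0_compat; lra).
  assert (0 < (a + 1) / (4 * a)) by (apply Rdiv_lt_0_compat; lra).
  rewrite (ln_mult ((2 * a + 1) / (a + 1))), (ln_mult ((a + 1) / (4 * a))), (ln_mult 2 2)
    by (assumption || lra || (apply Rmult_lt_0_compat; assumption || lra)).
  ring.
Qed.

Lemma KL_risk_delta_le a t : 0 < a -> 0 <= t <= 1 ->
  KL_risk (delta0 a) (delta1 a) t <=
  ln ((2 * a + 1) / (a + 1)) + 2 * (t * (1 - t)) * ln ((a + 1) / (4 * a)).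
Proof.
  intros Ha Ht; rewrite KL_risk_delta_eq by lra.
  generalize (bin_entropy_ge_parabola t Ht); lra.
Qed.

Lemma is_lub_max (E : R -> Prop) m : E m -> (forall r, E r -> r <= m) -> is_lub E m.
Proof. intros Em Hm; split; [exact Hm|intros b Hb; exact (Hb m Em)]. Qed.

Theorem mainTheorem5 (a : R) (ha : 0 < a) :
  (1 / 3 <= a ->
     is_lub (risk_values a) (ln ((2 * a + 1) / (a + 1)))) /\
  (a <= 1 / 3 ->
     is_lub (risk_values a)
       (1 / 2 * ln ((a + 1) / (4 * a)) + ln ((2 * a + 1) / (a + 1)))).
Proof.
  assert (Hq : 0 < (a + 1) / (4 * a)) by (apply Rdiv_lt_0_compat; lra).
  split; intros Ha; apply is_lub_max.
  - exists 0; split; [lra|].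
    rewrite KL_risk_delta_eq, bin_entropy_0 by lra; ring.
  - intros r [t [Ht ->]].
    assert (ln ((a + 1) / (4 * a)) <= 0).
    { rewrite <- ln_1; apply ln_le; [lra|].
      apply Rmult_le_reg_r with (4 * a); [lra|]; field_simplify; lra. }
    assert (0 <= t * (1 - t) * - ln ((a + 1) / (4 * a))) by (apply Rmult_le_pos; nra).
    generalize (KL_risk_delta_le a t ha Ht); lra.
  - exists (1 / 2); split; [lra|].
    rewrite KL_risk_delta_eq, bin_entropy_half by lra; field.
  - intros r [t [Ht ->]].
    assert (0 <= ln ((a + 1) / (4 * a))).
    { rewrite <- ln_1; apply ln_le; [lra|].
      apply Rmult_le_reg_r with (4 * a); [lra|]; field_simplify; lra. }
    assert (0 <= (1 / 4 - t * (1 - t)) * ln ((a + 1) / (4 * a)))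
      by (apply Rmult_le_pos; [generalize (pow2_ge_0 (t - 1 / 2)); nra | assumption]).
    generalize (KL_risk_delta_le a t ha Ht); lra.
Qed.
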